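(* For all integers $m\ge 4$ and $n\ge 10$, the complete bipartite graph $K_{m,n}$ belongs to $\mathcal{S}_3$.
   Context: $G\in\mathcal{S}_3$ means: for every $\beta:V(G)\to\mathbb{Z}_3$ with $\sum_v\beta(v)\equiv0\pmod3$ there is a strongly-connected orientation $D$ of $G$ with $d^+_D(v)-d^-_D(v)\equiv\beta(v)\pmod3$ for all $v$. *)

From HB Require Import structures.
From mathcomp Require Import all_boot all_order all_algebra.
Set Implicit Arguments. Unset Strict Implicit. Unset Printing Implicit Defensive.
Import GRing.Theory.

Definition simple_graph (V : finType) (adj : rel V) : Prop :=
  irreflexive adj /\ symmetric adj.

Definition is_orientation (V : finType) (adj D : rel V) : Prop :=
  (forall x y, D x y -> adj x y) /\
  (forall x y, adj x y -> (D x y && ~~ D y x) || (D y x && ~~ D x y)).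

Definition outdeg (V : finType) (D : rel V) (v : V) : nat := #|[set u | D v u]|.
Definition indeg (V : finType) (D : rel V) (v : V) : nat := #|[set u | D u v]|.

Definition strongly_connected (V : finType) (D : rel V) : Prop :=
  forall x y, connect D x y.

Definition in_S3 (V : finType) (adj : rel V) : Prop :=
  forall beta : V -> 'Z_3, (\sum_(v : V) beta v = 0)%R ->
  exists D : rel V, is_orientation adj D /\ strongly_connected D /\
    forall v, ((outdeg D v)%:R - (indeg D v)%:R = beta v)%R.

Definition Kmn_adj (m n : nat) : rel ('I_m + 'I_n)%type :=
  fun x y => match x, y with
             | inl _, inr _ => true
             | inr _, inl _ => true
             | _, _ => false
             end.
Arguments Kmn_adj : clear implicits.

From mathcomp Require Import all_boot all_order all_algebra.
From mathcomp Require Import ring zify.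
Set Implicit Arguments. Unset Strict Implicit. Unset Printing Implicit Defensive.
Import GRing.Theory.

(* An orientation of K_{m,n} is a 0/1 matrix f: the edge between row vertex i
   and column vertex j points from i to j iff f i j.  Working in Z_3, where
   2 = -1, the net degree of row i is -(row sum) - n and that of column j is
   m + (column sum), so prescribing beta amounts to prescribing every row and
   column sum of f modulo 3; the prescriptions are compatible exactly when
   beta sums to 0.  Strong connectivity follows from a combinatorial "hub"
   condition: rows 0..3 are linked in a cycle through columns, every column
   has both a 1 and a 0 in the hub rows, and every other row has both values. *)

Lemma connect_cycle (T : finType) (e : rel T) (k : nat) (v : nat -> T) :
  (forall t, t.+1 < k -> connect e (v t) (v t.+1)) ->
  connect e (v k.-1) (v 0) ->
  forall t, t < k -> connect e (v 0) (v t) /\ connect e (v t) (v 0).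
Proof.
move=> step back t ht; split.
  elim: t ht => [|t IH] ht; first exact: connect0.
  exact: connect_trans (IH (ltnW ht)) (step t ht).
have back_from d : forall s, s + d = k.-1 -> connect e (v s) (v 0).
  elim: d => [|d IH] s hs; first by move: hs; rewrite addn0 => ->.
  have hs1 : s.+1 < k by lia.
  by apply: connect_trans (step s hs1) (IH s.+1 _); lia.
by apply: (back_from (k.-1 - t)); lia.
Qed.

Definition bip_orient (m n : nat) (f : nat -> nat -> bool) : rel ('I_m + 'I_n) :=
  fun x y => match x, y with
             | inl i, inr j => f i j
             | inr j, inl i => ~~ f i j
             | _, _ => false
             end.
Arguments bip_orient : clear implicits.

Lemma bip_orient_is_orientation (m n : nat) (f : nat -> nat -> bool) :
  is_orientation (Kmn_adj m n) (bip_orient m n f).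
Proof.
split; first by case=> [i|j] [i'|j'].
by case=> [i|j] [i'|j'] //= _; case: (f _ _).
Qed.

Definition splits (k : nat) (b : nat -> bool) : Prop :=
  (exists2 p, p < k & b p) /\ (exists2 q, q < k & ~~ b q).

Definition hub_grid (k m n : nat) (f : nat -> nat -> bool) : Prop :=
  [/\ forall t, t < k -> exists2 j, j < n & f t j && ~~ f (t.+1 %% k) j,
      forall j, j < n -> splits k (f^~ j)
    & forall i, k <= i < m -> splits n (f i)].

(* The hub condition makes the orientation strongly connected: every vertex
   reaches hub 0 and is reached from it. *)
Lemma hub_grid_strongly_connected (k m n : nat) (f : nat -> nat -> bool) :
  0 < k <= m -> hub_grid k m n f -> strongly_connected (bip_orient m n f).
Proof.
case: m => [|m]; first by case: k.
case: n => [|n] /andP [k_gt0 k_le] [Hcyc Hcol Hrow].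
  by have [j] := Hcyc 0 k_gt0.
set D := bip_orient m.+1 n.+1 f.
pose row t : 'I_m.+1 + 'I_n.+1 := inl (inord t).
pose col j : 'I_m.+1 + 'I_n.+1 := inr (inord j).
have row_col i j : i < m.+1 -> j < n.+1 -> f i j -> connect D (row i) (col j).
  by move=> hi hj hf; apply: connect1; rewrite /D /= !inordK.
have col_row i j : i < m.+1 -> j < n.+1 -> ~~ f i j -> connect D (col j) (row i).
  by move=> hi hj hf; apply: connect1; rewrite /D /= !inordK.
have hub_link t t' : t < k -> t' < k -> (exists2 j, j < n.+1 & f t j && ~~ f t' j) ->
    connect D (row t) (row t').
  move=> ht ht' [j hj /andP [h1 h2]].
  by apply: connect_trans (row_col _ _ _ hj h1) (col_row _ _ _ hj h2);
     apply: leq_trans k_le.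
have hub : forall t, t < k -> connect D (row 0) (row t) /\ connect D (row t) (row 0).
  apply: connect_cycle.
  - move=> s hs; apply: (hub_link _ _ (ltnW hs) hs).
    by rewrite -[s.+1](modn_small hs); exact: Hcyc (ltnW hs).
  - have hk1 : k.-1 < k by rewrite prednK.
    apply: (hub_link _ _ hk1 k_gt0).
    by rewrite -(modnn k) -{2}(prednK k_gt0); exact: Hcyc hk1.
have col_hub j : j < n.+1 -> connect D (row 0) (col j) /\ connect D (col j) (row 0).
  move=> hj; have [[p hp hfp] [q hq hfq]] := Hcol j hj.
  split; first exact: connect_trans (hub p hp).1 (row_col _ _ (leq_trans hp k_le) hj hfp).
  exact: connect_trans (col_row _ _ (leq_trans hq k_le) hj hfq) (hub q hq).2.
have reach x : connect D (row 0) x /\ connect D x (row 0).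
  case: x => [i|j]; last by rewrite -(inord_val j); exact: col_hub.
  rewrite -(inord_val i); have hi := ltn_ord i.
  have [hik|hki] := ltnP i k; first exact: hub.
  have /Hrow [[j hj hfj] [q hq hfq]] : k <= i < m.+1 by rewrite hki.
  split; first exact: connect_trans (col_hub q hq).1 (col_row _ _ hi hq hfq).
  exact: connect_trans (row_col _ _ hi hj hfj) (col_hub j hj).2.
by move=> x y; exact: connect_trans (reach x).2 (reach y).1.
Qed.

Section NetDegree.

Variables (m n : nat) (f : nat -> nat -> bool).
Local Notation D := (bip_orient m n f).

Lemma card_sum_set (P : 'I_m + 'I_n -> bool) :
  #|[set u | P u]| = \sum_(i < m) P (inl i) + \sum_(j < n) P (inr j).
Proof.
rewrite -sum1_card big_mkcond big_sumType /=.
by congr (_ + _); apply: eq_bigr => i _; rewrite inE; case: (P _).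
Qed.

Lemma outdeg_row (i : 'I_m) : outdeg D (inl i) = \sum_(j < n) f i j.
Proof. by rewrite /outdeg card_sum_set big1. Qed.

Lemma indeg_row (i : 'I_m) : indeg D (inl i) = \sum_(j < n) ~~ f i j.
Proof. by rewrite /indeg card_sum_set big1. Qed.

Lemma outdeg_col (j : 'I_n) : outdeg D (inr j) = \sum_(i < m) ~~ f i j.
Proof. by rewrite /outdeg card_sum_set [X in _ + X]big1 ?addn0. Qed.

Lemma indeg_col (j : 'I_n) : indeg D (inr j) = \sum_(i < m) f i j.
Proof. by rewrite /indeg card_sum_set [X in _ + X]big1 ?addn0. Qed.

End NetDegree.

Section Z3Degrees.

Local Open Scope ring_scope.

Lemma Z3_double (x : 'Z_3) : x + x = - x.
Proof. by case: x => [[|[|[|]]] ?] //; apply: val_inj. Qed.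

Lemma sum_negb (R : pzRingType) (k : nat) (b : nat -> bool) :
  \sum_(j < k) (~~ b j)%:R = k%:R - \sum_(j < k) (b j)%:R :> R.
Proof.
apply/eqP; rewrite eq_sym subr_eq -big_split /=.
rewrite -[k in k%:R]card_ord -sumr_const; apply/eqP/eq_bigr => j _.
by case: (b j); rewrite ?addr0 ?add0r.
Qed.

Variables (m n : nat) (f : nat -> nat -> bool).
Local Notation D := (bip_orient m n f).

Lemma net_row (i : 'I_m) :
  (outdeg D (inl i))%:R - (indeg D (inl i))%:R
  = - \sum_(j < n) (f i j)%:R - n%:R :> 'Z_3.
Proof.
rewrite outdeg_row indeg_row !natr_sum (sum_negb _ n (f i)) opprB addrA Z3_double.
by rewrite addrC.
Qed.

Lemma net_col (j : 'I_n) :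
  (outdeg D (inr j))%:R - (indeg D (inr j))%:R
  = m%:R + \sum_(i < m) (f i j)%:R :> 'Z_3.
Proof.
rewrite outdeg_col indeg_col !natr_sum (sum_negb _ m (f^~ j)).
by rewrite -addrA -opprD Z3_double opprK.
Qed.

End Z3Degrees.

Lemma Z3_nat (a : nat) (z : 'Z_3) : a %% 3 = val z -> (a%:R = z)%R.
Proof. by move=> az; apply: val_inj; rewrite /= Zp_nat. Qed.

(* A depth-first search
   over the columns produces a block for each of the 3^9 residue vectors, and
   evaluation checks every answer. *)

Fixpoint bitvecs (k : nat) : seq (seq bool) :=
  if k is k'.+1 then [seq b :: v | b <- [:: false; true], v <- bitvecs k']
  else [:: [::]].

Fixpoint residues (k : nat) : seq (seq nat) :=
  if k is k'.+1 then [seq x :: v | x <- iota 0 3, v <- residues k'] else [:: [::]].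

Definition column_choices (g : nat) : seq (seq bool) :=
  [seq v <- bitvecs 4 | [&& has id v, has negb v & count id v %% 3 == g]].

(* Remaining row residues after placing column v (subtraction is +2 mod 3). *)
Definition absorb (d : seq nat) (v : seq bool) : seq nat :=
  [seq (x.1 + 2 * nat_of_bool x.2) %% 3 | x <- zip d v].

Fixpoint fill (d gs : seq nat) : option (seq (seq bool)) :=
  if gs is g :: gs' then
    let fix first_fit cs :=
      if cs is v :: cs' then
        if fill (absorb d v) gs' is Some A then Some (v :: A) else first_fit cs'
      else None in
    first_fit (column_choices g)
  else if all (pred1 0) d then Some [::] else None.

Definition blk (A : seq (seq bool)) (p j : nat) : bool := nth false (nth [::] A j) p.

Definition line_sum (k : nat) (b : nat -> bool) : nat :=
  sumn [seq nat_of_bool (b x) | x <- iota 0 k].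

Definition splitsb (k : nat) (b : nat -> bool) : bool :=
  has b (iota 0 k) && has (predC b) (iota 0 k).

Definition block_ok (d g : seq nat) (A : seq (seq bool)) : bool :=
  all (fun j => (line_sum 4 (blk A ^~ j) %% 3 == nth 0 g j) && splitsb 4 (blk A ^~ j))
      (iota 0 6) &&
  all (fun p => line_sum 6 (blk A p) %% 3 == nth 0 d p) (iota 0 3).

Definition corner_certificate : bool :=
  all (fun d => all (fun g => if fill d g is Some A then block_ok d g A else false)
                    (residues 6))
      (residues 3).

Lemma corner_certificate_holds : corner_certificate.
Proof. by vm_compute. Qed.

Lemma line_sumE (k : nat) (b : nat -> bool) : line_sum k b = \sum_(x < k) b x.
Proof.
by rewrite /line_sum -(big_mkord xpredT (fun x => nat_of_bool (b x))) /index_iota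
  subn0 sumnE big_map.
Qed.

Lemma splitsbP (k : nat) (b : nat -> bool) : splitsb k b -> splits k b.
Proof.
case/andP=> /hasP [p] + hp /hasP [q] + hq.
by rewrite !mem_iota => /andP [_ p_lt] /andP [_ q_lt]; split; [exists p | exists q].
Qed.

Lemma mem_residues (s : seq nat) : all (fun x => x < 3) s -> s \in residues (size s).
Proof.
elim: s => [|x s IH] // /andP [x_lt /IH s_in].
by apply: (allpairs_f cons _ s_in); rewrite mem_iota.
Qed.

Lemma corner_block (d g : nat -> 'Z_3) : exists A : nat -> nat -> bool,
  (forall j, j < 6 -> (\sum_(p < 4) (A p j)%:R = g j)%R /\ splits 4 (A^~ j)) /\
  (forall p, p < 3 -> (\sum_(j < 6) (A p j)%:R = d p)%R).
Proof.
pose res (k : nat) (z : nat -> 'Z_3) := [seq val (z x) | x <- iota 0 k].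
have res_in k z : res k z \in residues k.
  have := @mem_residues (res k z); rewrite size_map size_iota; apply.
  by apply/allP => _ /mapP [x _ ->]; exact: ltn_ord.
have nth_res k z x : x < k -> nth 0 (res k z) x = val (z x).
  by move=> x_lt; rewrite (nth_map 0) ?size_iota // nth_iota.
have := corner_certificate_holds.
move=> /allP /(_ _ (res_in 3 d)) /allP /(_ _ (res_in 6 g)).
case: fill => [A|//] /andP [/allP cols /allP rows].
exists (blk A); split=> [j j_lt | p p_lt].
- have /cols /andP [/eqP col_sum col_split] : j \in iota 0 6 by rewrite mem_iota.
  split; last exact: splitsbP.
  by rewrite -natr_sum; apply: Z3_nat; rewrite -line_sumE col_sum nth_res.
- have /rows /eqP row_sum : p \in iota 0 3 by rewrite mem_iota.
  by rewrite -natr_sum; apply: Z3_nat; rewrite -line_sumE row_sum nth_res.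
Qed.

Lemma sum_split (V : nmodType) (k n : nat) (F : nat -> V) : k <= n ->
  (\sum_(j < n) F j = \sum_(j < k) F j + \sum_(k <= j < n) F j)%R.
Proof. by move=> kn; rewrite -!(big_mkord xpredT) (big_cat_nat (leq0n k) kn). Qed.

Lemma sum_prefix (R : pzSemiRingType) (s n : nat) : s <= n ->
  (\sum_(j < n) (j < s)%:R = s%:R :> R)%R.
Proof.
move=> sn; rewrite (sum_split (fun j => (j < s)%:R%R) sn).
rewrite [X in (_ + X)%R]big1_seq ?addr0 => [|j].
  by rewrite (eq_bigr (fun=> 1%R)) ?sumr_const ?card_ord // => j _; rewrite ltn_ord.
by case/andP=> _; rewrite mem_index_iota => /andP [sj _]; rewrite ltnNge sj.
Qed.

Lemma forced_row_sum (V : zmodType) (m n : nat) (F : nat -> nat -> V)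
    (r s : nat -> V) (i0 : nat) : i0 < m ->
  (\sum_(i < m) r i = \sum_(j < n) s j)%R ->
  (forall j, j < n -> (\sum_(i < m) F i j = s j)%R) ->
  (forall i, i < m -> i != i0 -> (\sum_(j < n) F i j = r i)%R) ->
  (\sum_(j < n) F i0 j = r i0)%R.
Proof.
move=> i0_lt total cols rows.
have grand : (\sum_(i < m) \sum_(j < n) F i j = \sum_(i < m) r i)%R.
  rewrite exchange_big total; apply: eq_bigr => j _; exact: cols.
move: grand; rewrite (bigD1 (Ordinal i0_lt)) // [in RHS](bigD1 (Ordinal i0_lt)) //=.
rewrite (eq_bigr (fun i : 'I_m => r i)) => [|i /= i_ne]; first exact: addIr.
exact: rows.
Qed.

(* A representative of z in {1, 2, 3}: the length of a nonempty row prefix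
   with z ones mod 3. *)
Definition ones (z : 'Z_3) : nat := if z == 0%R then 3 else val z.

Lemma ones_bounds (z : 'Z_3) : 0 < ones z <= 3.
Proof. by case: z => [[|[|[|]]] ?]. Qed.

Lemma natr_ones (z : 'Z_3) : ((ones z)%:R = z)%R.
Proof. by case: z => [[|[|[|]]] ?] //; apply: val_inj. Qed.

(* The hub part of a column with residue g and phase t: 1, 2 or 3 ones among
   rows 0..3, placed so that row t mod 4 is a 1 and the next row a 0. *)
Definition pattern (g : 'Z_3) (t p : nat) : bool :=
  let t' := t %% 4 in
  if g == 1%R then p == t'
  else if g == 2%R then (p == t') || (p == (t' + 2) %% 4)
  else p != t'.+1 %% 4.

Lemma pattern_sum (g : 'Z_3) (t : nat) : (\sum_(p < 4) (pattern g t p)%:R = g)%R.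
Proof.
rewrite /pattern; have := ltn_pmod t (isT : 0 < 4).
case: (t %% 4) => [|[|[|[|]]]] // _; rewrite !big_ord_recr big_ord0 /=;
  by case: g => [[|[|[|]]] ?] //; apply: val_inj.
Qed.

Lemma pattern_phase (g : 'Z_3) (t : nat) :
  pattern g t (t %% 4) && ~~ pattern g t ((t %% 4).+1 %% 4).
Proof.
rewrite /pattern; have := ltn_pmod t (isT : 0 < 4).
by case: (t %% 4) => [|[|[|[|]]]] // _; case: g => [[|[|[|]]] ?].
Qed.

Section Grid.

Variables (m n : nat) (c e : nat -> 'Z_3).
Hypotheses (m_ge4 : 4 <= m) (n_ge10 : 10 <= n).

Definition grid (A : nat -> nat -> bool) (i j : nat) : bool :=
  if i < 4 then (if j < 6 then A i j else pattern (e j) j i) else j < ones (c i).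

Definition pattern_load (p : nat) : 'Z_3 :=
  (\sum_(6 <= j < n) (pattern (e j) j p)%:R)%R.

Definition prefix_load (j : nat) : 'Z_3 :=
  (\sum_(4 <= i < m) (j < ones (c i))%:R)%R.

Variable A : nat -> nat -> bool.

Lemma grid_row_hub (p : nat) : p < 4 ->
  (\sum_(j < n) (grid A p j)%:R = \sum_(j < 6) (A p j)%:R + pattern_load p)%R.
Proof.
move=> p_lt.
rewrite (@sum_split _ 6 n (fun j => (grid A p j)%:R%R)) ?(leq_trans _ n_ge10) //.
congr (_ + _)%R; first by apply: eq_bigr => j _; rewrite /grid p_lt ltn_ord.
apply: eq_big_nat => j /andP [j_ge _]; by rewrite /grid p_lt ltnNge j_ge.
Qed.

Lemma grid_row_prefix (i : nat) : 4 <= i -> (\sum_(j < n) (grid A i j)%:R = c i)%R.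
Proof.
move=> i_ge; rewrite /grid ltnNge i_ge /= sum_prefix ?natr_ones //.
by case/andP: (ones_bounds (c i)) => _ /leq_trans; apply; apply: leq_trans n_ge10.
Qed.

Lemma grid_col (j : nat) :
  (\sum_(i < m) (grid A i j)%:R = \sum_(p < 4) (grid A p j)%:R + prefix_load j)%R.
Proof.
rewrite (sum_split (fun i => (grid A i j)%:R%R) m_ge4); congr (_ + _)%R.
apply: eq_big_nat => i /andP [i_ge _]; by rewrite /grid ltnNge i_ge.
Qed.

Lemma prefix_load_vanish (j : nat) : 3 <= j -> prefix_load j = 0%R.
Proof.
move=> j_ge; apply: big1_seq => i _.
case/andP: (ones_bounds (c i)) => _ /leq_trans /(_ j_ge).
by rewrite leqNgt => /negbTE ->.
Qed.

End Grid.

Lemma residue_grid (m n : nat) (c e : nat -> 'Z_3) : 4 <= m -> 10 <= n ->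
  (\sum_(i < m) c i = \sum_(j < n) e j)%R ->
  exists f : nat -> nat -> bool,
    [/\ forall i, i < m -> (\sum_(j < n) (f i j)%:R = c i)%R,
        forall j, j < n -> (\sum_(i < m) (f i j)%:R = e j)%R
      & hub_grid 4 m n f].
Proof.
move=> m_ge4 n_ge10 total.
have [A [A_cols A_rows]] := corner_block (fun p => c p - pattern_load n e p)%R
                                         (fun j => e j - prefix_load m c j)%R.
pose f := grid c e A.
have cols j : j < n -> (\sum_(i < m) (f i j)%:R = e j)%R.
  move=> j_lt; rewrite grid_col //; have [j_lt6|j_ge6] := ltnP j 6.
  - rewrite (eq_bigr (fun p : 'I_4 => (A p j)%:R%R)) => [|p _]; last first.
      by rewrite /f /grid ltn_ord j_lt6.
    by rewrite (A_cols j j_lt6).1 subrK.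
  - rewrite prefix_load_vanish ?(leq_trans _ j_ge6) // addr0.
    rewrite (eq_bigr (fun p : 'I_4 => (pattern (e j) j p)%:R%R)) ?pattern_sum //.
    by move=> p _; rewrite /f /grid ltn_ord ltnNge j_ge6.
have rows i : i < m -> i != 3 -> (\sum_(j < n) (f i j)%:R = c i)%R.
  move=> i_lt i_ne3; have [i_lt4|i_ge4] := ltnP i 4; last exact: grid_row_prefix.
  have i_lt3 : i < 3 by rewrite ltn_neqAle i_ne3 -ltnS.
  by rewrite grid_row_hub // A_rows // subrK.
exists f; split=> //.
- move=> i i_lt; have [->|] := eqVneq i 3; last exact: rows.
  exact: (@forced_row_sum _ m n (fun i j => (f i j)%:R%R) c e 3 m_ge4 total cols rows).
split.
- move=> t t_lt; exists (6 + (t + 2) %% 4).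
    by apply: leq_trans n_ge10; rewrite ltn_add2l ltn_pmod.
  have phase : (6 + (t + 2) %% 4) %% 4 = t by case: t t_lt => [|[|[|[|]]]].
  rewrite /f /grid t_lt ltn_mod ltnNge leq_addr /=.
  by have := pattern_phase (e (6 + (t + 2) %% 4)) (6 + (t + 2) %% 4); rewrite phase.
- move=> j j_lt; have [j_lt6|j_ge6] := ltnP j 6.
    have [_ [[p p_lt hp] [q q_lt hq]]] := A_cols j j_lt6.
    by split; [exists p | exists q]; rewrite // /f /grid ?p_lt ?q_lt j_lt6.
  have /andP [hp hq] := pattern_phase (e j) j.
  by split; [exists (j %% 4) | exists ((j %% 4).+1 %% 4)];
    rewrite ?ltn_pmod // /f /grid ltn_pmod // ltnNge j_ge6.
- move=> i /andP [i_ge4 i_lt]; rewrite /splits /f /grid ltnNge i_ge4 /=.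
  have /andP [ones_pos ones_le3] := ones_bounds (c i).
  split; [exists 0 | exists 3] => //; last by rewrite -leqNgt.
  all: exact: leq_trans n_ge10.
Qed.

Theorem mainTheorem12 (m n : nat) (hm : 4 <= m) (hn : 10 <= n) :
  in_S3 (Kmn_adj m n).
Proof.
case: m hm => [|m] // hm; case: n hn => [|n] // hn.
move=> beta beta_sum.
(* Row i must have sum -(beta + n) and column j sum beta - m, mod 3. *)
pose c i := (- (beta (inl (inord i)) + n.+1%:R))%R.
pose e j := (beta (inr (inord j)) - m.+1%:R)%R.
pose SA := (\sum_(i < m.+1) beta (inl i))%R.
pose SB := (\sum_(j < n.+1) beta (inr j))%R.
have SAB : (SA + SB = 0)%R by move: beta_sum; rewrite big_sumType.
have total : (\sum_(i < m.+1) c i = \sum_(j < n.+1) e j)%R.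
  rewrite /c /e sumrN !big_split /= !sumr_const !card_ord.
  under eq_bigr do rewrite inord_val; under [in RHS]eq_bigr do rewrite inord_val.
  rewrite -/SA -/SB (_ : SB = - SA)%R; last by apply/eqP; rewrite -addr_eq0 addrC SAB.
  ring.
have [f [rows cols hub]] := residue_grid hm hn total.
exists (bip_orient m.+1 n.+1 f); split; first exact: bip_orient_is_orientation.
split; first exact: (hub_grid_strongly_connected (k := 4)).
case=> [i|j].
- by rewrite net_row rows // /c inord_val opprK addrK.
- by rewrite net_col cols // /e inord_val addrC subrK.
Qed.
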